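(* Let $H(a,b,c)=C(a,b+c)-C(b,a+c)$. Then for all non-negative integers $a,b,c$, \[\frac{1}{4^c}H(a,b,c)=\sum_{j=1}^c\frac{1}{4^j}H(b+1,a+1,j-2).\]
   Context: $C(p,q)=\frac{(2p)!(2q)!}{p!(p+q)!q!}$ for non-negative integers $p,q$. Note $H(b+1,a+1,j-2)=C(b+1,a+j-1)-C(a+1,b+j-1)$, whose arguments are non-negative for $j\ge1$. *)

From mathcomp Require Import all_boot all_order all_algebra.
Set Implicit Arguments. Unset Strict Implicit. Unset Printing Implicit Defensive.
Import Order.TTheory GRing.Theory Num.Theory.
Local Open Scope ring_scope.

Definition C (p q : nat) : rat :=
  ((p.*2)`! * (q.*2)`!)%:R / (p`! * (p + q)`! * q`!)%:R.

Definition H (a b c : nat) : rat := C a (b + c) - C b (a + c).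

(* H(b+1,a+1,j-2) for j >= 1, where j-2 may be -1:
   = C(b+1, a+1+(j-2)) - C(a+1, b+1+(j-2)) = C(b+1,a+j-1) - C(a+1,b+j-1). *)
Definition Hshift (a b j : nat) : rat :=
  C b.+1 (a + j - 1) - C a.+1 (b + j - 1).

From mathcomp Require Import all_boot all_order all_algebra.
From mathcomp Require Import zify ring.
Import GRing.Theory Num.Theory.
Local Open Scope ring_scope.

(* The numbers C satisfy C(p,q+1) + C(p+1,q) = 4 C(p,q): each summand is C(p,q)
   times (4q+2)/(p+q+1), resp. (4p+2)/(p+q+1).  Hence
   H(a,b,c+1) = 4 H(a,b,c) + H(b+1,a+1,c-1), and dividing by 4^(c+1) makes the
   claim telescope down to H(a,b,0) = 0, which holds because C is symmetric. *)

Lemma linear_rec_div_expr (F : fieldType) (x : F) (f g : nat -> F) :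
  x != 0 -> (forall n, f n.+1 = x * f n + g n.+1) ->
  forall n, f n / x ^+ n = f 0 + \sum_(1 <= j < n.+1) g j / x ^+ j.
Proof.
move=> x_neq0 f_rec; elim=> [|n IHn]; first by rewrite big_geq // divr1 addr0.
rewrite big_nat_recr //= addrA -IHn f_rec exprS.
by field; rewrite expf_neq0.
Qed.

Lemma C_sym p q : C p q = C q p.
Proof. by rewrite /C addnC mulnC; congr (_ / _%:R); ring. Qed.

Lemma natr_fact_neq0 (R : numDomainType) n : n`!%:R != 0 :> R.
Proof. by rewrite pnatr_eq0 -lt0n fact_gt0. Qed.

Lemma C_succr p q : (p + q).+1%:R * C p q.+1 = (4 * q + 2)%:R * C p q.
Proof.
rewrite /C doubleS addnS !factS.
have -> : ((q.*2).+2 = 2 * q.+1)%N by lia.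
have -> : (4 * q + 2 = 2 * (q.*2).+1)%N by lia.
rewrite !natrM; field.
by rewrite !natr_fact_neq0 -natrD !nat1r !pnatr_eq0.
Qed.

Lemma C_succl p q : (p + q).+1%:R * C p.+1 q = (4 * p + 2)%:R * C p q.
Proof. by rewrite C_sym addnC C_succr C_sym. Qed.

Lemma C_succ p q : C p q.+1 + C p.+1 q = 4%:R * C p q.
Proof.
have pq1_neq0 : (p + q).+1%:R != 0 :> rat by rewrite pnatr_eq0.
apply: (mulfI pq1_neq0).
rewrite mulrDr C_succr C_succl -mulrDl -natrD.
have -> : (4 * q + 2 + (4 * p + 2) = (p + q).+1 * 4)%N by lia.
by rewrite natrM -mulrA.
Qed.

Lemma H0 a b : H a b 0 = 0.
Proof. by rewrite /H !addn0 C_sym subrr. Qed.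

Lemma H_succ a b c : H a b c.+1 = 4%:R * H a b c + Hshift a b c.+1.
Proof. by rewrite /H /Hshift !addnS !subn1 /= mulrBr -!C_succ; ring. Qed.

Theorem corollary8p10 (a b c : nat) :
  H a b c / 4%:R ^+ c = \sum_(1 <= j < c.+1) Hshift a b j / 4%:R ^+ j.
Proof.
rewrite (@linear_rec_div_expr _ 4%:R (H a b) (Hshift a b)) //.
  by rewrite H0 add0r.
exact: H_succ.
Qed.
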